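(* Let $d\ge2$ and let $R=(r_{ij})$ be a real $d\times d$ matrix with $r_{ii}=1$ for all $i$. Assume $R$ is not an $\mathcal S$-matrix and every principal sub-matrix of $R$ other than $R$ itself is completely-$\mathcal S$. Then for every $i\in\{1,\dots,d\}$ there exists $j\neq i$ with $r_{ij}\neq0$.
   Context: $x>0$ (resp. $x\ge0$) means all entries positive (resp. non-negative). A square matrix $M$ is an $\mathcal S$-matrix if there exists a vector $x\ge0$ with $Mx>0$; it is completely-$\mathcal S$ if all its principal sub-matrices (sub-matrices $(m_{ij})_{i,j\in I}$ for non-empty index sets $I$, including the full set) are $\mathcal S$-matrices. *)

From mathcomp Require Import all_boot all_order all_algebra.
From mathcomp Require Import reals.
Set Implicit Arguments. Unset Strict Implicit. Unset Printing Implicit Defensive.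
Import Order.TTheory GRing.Theory Num.Theory.
Local Open Scope ring_scope.

Definition S_matrix (R : realType) (n : nat) (M : 'M[R]_n) : Prop :=
  exists x : 'cV[R]_n,
    (forall i, 0 <= x i ord0) /\ (forall i, 0 < (M *m x) i ord0).

(* principal submatrix of M on index set I (indices listed in increasing order) *)
Definition principal_submx (R : realType) (d : nat) (M : 'M[R]_d)
  (I : {set 'I_d}) : 'M[R]_#|I| :=
  mxsub (fun k => enum_val k) (fun k => enum_val k) M.

Definition completely_S (R : realType) (d : nat) (M : 'M[R]_d) : Prop :=
  forall I : {set 'I_d}, I != set0 -> S_matrix (principal_submx M I).

From mathcomp Require Import all_boot all_order all_algebra.
From mathcomp Require Import reals lra.
Import Order.TTheory GRing.Theory Num.Theory.
Local Open Scope ring_scope.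

(* If row [i] of [R] vanished off the diagonal, the principal submatrix [R']
   obtained by deleting [i], being completely-S, would have some [y >= 0] with
   [R' y > 0].  Padding [y] with a zero at [i] and taking [x = e_i + c y], row
   [i] of [R x] is [r_ii = 1] and row [j <> i] is [r_ji + c (R' y)_j], positive
   once [c] is large: [R] would be an S-matrix. *)

Section S_matrix_lift.

Context {R : realType} {m n : nat} (f : 'I_m -> 'I_n).
Implicit Types (M : 'M[R]_n) (y : 'cV[R]_m).

(* [colsub f 1%:M *m y] places [y k] at position [f k], summing collisions. *)

Lemma colsub1_mul_ge0 y :
  (forall k, 0 <= y k ord0) -> forall l, 0 <= (colsub f 1%:M *m y) l ord0.
Proof.
move=> y_ge0 l; rewrite mxE; apply: sumr_ge0 => k _.
by rewrite !mxE mulr_ge0.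
Qed.

Lemma mulmx_colsub1 M y : M *m (colsub f 1%:M *m y) = colsub f M *m y.
Proof. by rewrite mulmxA mulmx_colsub mulmx1. Qed.

Lemma rowsub_mulmx_colsub1 M y :
  rowsub f (M *m (colsub f 1%:M *m y)) = mxsub f f M *m y.
Proof. by rewrite (mxsubrc f f M) mul_rowsub_mx mulmx_colsub1. Qed.

Lemma S_matrix_mxsub_surj M :
  (forall j, exists k, f k = j) -> S_matrix (mxsub f f M) -> S_matrix M.
Proof.
move=> f_surj [y [y_ge0 My_gt0]]; exists (colsub f 1%:M *m y); split.
  exact: colsub1_mul_ge0.
move=> j; have [k <-] := f_surj j.
by have := My_gt0 k; rewrite -rowsub_mulmx_colsub1 mxE.
Qed.

End S_matrix_lift.

Lemma completely_S_S_matrix {R : realType} {n : nat} (M : 'M[R]_n) :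
  (0 < n)%N -> completely_S M -> S_matrix M.
Proof.
move=> n_gt0 /(_ setT).
have -> : [set: 'I_n] != set0 by apply/set0Pn; exists (Ordinal n_gt0).
move/(_ isT); apply: S_matrix_mxsub_surj => j.
by exists (enum_rank_in (in_setT j) j); rewrite enum_rankK_in.
Qed.

Lemma exists_scale_pos {R : realType} {n : nat} (a b : 'I_n -> R) :
  (forall k, 0 < a k) -> exists2 c : R, 0 <= c & forall k, 0 < b k + c * a k.
Proof.
move=> a_gt0; pose c := 1 + \sum_k `|b k| / a k.
have quot_ge0 k : 0 <= `|b k| / a k by rewrite divr_ge0 // ltW.
exists c => [|k]; first by rewrite addr_ge0 // sumr_ge0.
have : `|b k| / a k < c.
  have rest_ge0 : 0 <= \sum_(l | l != k) `|b l| / a l by rewrite sumr_ge0.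
  rewrite /c (bigD1 k) //=; lra.
rewrite ltr_pdivrMr // => bk_lt.
have : - b k <= `|b k| by rewrite -normrN ler_norm.
lra.
Qed.

Lemma S_matrix_extend {R : realType} {n : nat} (M : 'M[R]_n) (i : 'I_n) :
  0 < M i i -> (forall j, j != i -> 0 <= M i j) ->
  S_matrix (principal_submx M [set~ i]) -> S_matrix M.
Proof.
move=> Mii_gt0 Mi_ge0 [y [y_ge0 Ay_gt0]].
pose f (k : 'I_#|[set~ i]|) := enum_val k.
have f_neq k : f k != i by have := enum_valP k; rewrite !inE.
pose z := colsub f 1%:M *m y.
have z_ge0 l : 0 <= z l ord0 by exact: colsub1_mul_ge0.
have [c c_ge0 c_big] := exists_scale_pos _ (fun k => M (f k) i) Ay_gt0.
exists (delta_mx i ord0 + c *: z); split => [l | j].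
  by rewrite mxE [delta_mx _ _ _ _]mxE [(c *: z) _ _]mxE addr_ge0 ?mulr_ge0.
have Mx_j : (M *m (delta_mx i ord0 + c *: z)) j ord0
             = M j i + c * (M *m z) j ord0.
  by rewrite mulmxDr -colE -scalemxAr !mxE.
rewrite Mx_j; have [->|j_neq] := eqVneq j i.
  rewrite (lt_le_trans Mii_gt0) // lerDl mulr_ge0 // mulmx_colsub1 mxE.
  rewrite sumr_ge0 // => k _.
  by rewrite mxE mulr_ge0 ?Mi_ge0.
have j_in : j \in [set~ i] by rewrite !inE.
have <- : f (enum_rank_in j_in j) = j by rewrite /f enum_rankK_in.
by move: (c_big (enum_rank_in j_in j)); rewrite -rowsub_mulmx_colsub1 mxE.
Qed.

Theorem lemma1 (R : realType) (d : nat) (Rm : 'M[R]_d)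
  (hd : (2 <= d)%N)
  (hdiag : forall i, Rm i i = 1)
  (hnotS : ~ S_matrix Rm)
  (hsub : forall I : {set 'I_d}, I != set0 -> I != setT ->
            completely_S (principal_submx Rm I)) :
  forall i : 'I_d, exists j : 'I_d, j != i /\ Rm i j != 0.
Proof.
move=> i.
have /existsP[j /andP[j_neq Rij_neq0]] : [exists j, (j != i) && (Rm i j != 0)].
  apply: contraT => /existsPn row_i_zero; exfalso; apply: hnotS.
  have compl_card_gt0 : (0 < #|[set~ i]|)%N.
    by rewrite cardsC1 card_ord -subn1 subn_gt0.
  have compl_neq0 : [set~ i] != set0 by rewrite -card_gt0.
  have compl_neqT : [set~ i] != setT.
    by apply/negP => /eqP/setP/(_ i); rewrite !inE eqxx.
  apply: (S_matrix_extend Rm i) => [|j j_neq|].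
  - by rewrite hdiag ltr01.
  - by move: (row_i_zero j); rewrite j_neq negbK => /eqP ->.
  exact: completely_S_S_matrix compl_card_gt0 (hsub _ compl_neq0 compl_neqT).
by exists j.
Qed.
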